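(* Let $K$ be a knot with Wirtinger presentation on $n$ generators, and set $S^k_K=V(E^k_K)\setminus V(E^{k+1}_K)\subset\mathbb C^*$ (a finite set for $k\ge1$). Then the class of the representation variety in the Grothendieck ring of complex algebraic varieties is $$[\mathcal R_{\mathrm{AGL}_1}(K)]=\mathbb L(\mathbb L-1)+\sum_{k=1}^{n-1}|S^k_K|\,(\mathbb L^{k+1}-\mathbb L),$$ where $\mathbb L=[\mathbb A^1_{\mathbb C}]$.
   Context: $\mathcal R_{\mathrm{AGL}_1}(K)=\mathrm{Hom}(\pi_1(S^3-K),\mathrm{AGL}_1(\mathbb C))$, $\mathrm{AGL}_1(\mathbb C)=\{\begin{pmatrix}1&0\\ a&t\end{pmatrix}: a\in\mathbb C,t\in\mathbb C^*\}$. Using Wirtinger generators $x_1,\dots,x_n$ with $\rho(x_i)=\begin{pmatrix}1&0\\ a_i&t\end{pmatrix}$ (common $t$), it is the subvariety of $\mathbb C^*\times\mathbb C^n$ given by $A_K(t)a=0$, where $A_K(t)$ is the $(n-1)\times n$ Alexander matrix (abelianized Fox derivatives of the Wirtinger relators). Elementary ideals: $E^k_K=0$ for $k\le 0$, generated by the $(n-k)$-minors of $A_K$ for $0<k\le n-1$, and the unit ideal for $k\ge n$; $V(E^k_K)\subset\mathbb C^*$ is its common zero set. *)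

From HB Require Import structures.
From mathcomp Require Import all_boot all_order all_algebra.
From mathcomp Require Import reals complex.
Set Implicit Arguments. Unset Strict Implicit. Unset Printing Implicit Defensive.
Import Order.TTheory GRing.Theory Num.Theory.
Local Open Scope ring_scope.

Definition pset (C : Type) (m : nat) := 'rV[C]_m -> Prop.

Inductive polyfun (C : comNzRingType) (m : nat) : ('rV[C]_m -> C) -> Prop :=
  | pf_const (c : C) : polyfun (fun _ => c)
  | pf_coord (i : 'I_m) : polyfun (fun x => x 0 i)
  | pf_add f g : polyfun f -> polyfun g -> polyfun (fun x => f x + g x)
  | pf_mul f g : polyfun f -> polyfun g -> polyfun (fun x => f x * g x).

Definition zclosed (C : comNzRingType) (m : nat) (Z : pset C m) : Prop :=
  exists (k : nat) (f : 'I_k -> 'rV[C]_m -> C),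
    (forall i, polyfun (f i)) /\ (forall x, Z x <-> forall i, f i x = 0).

(* locally closed subsets (= quasi-affine varieties, C algebraically closed) *)
Definition locally_closed (C : comNzRingType) (m : nat) (X : pset C m) : Prop :=
  exists Z W : pset C m, zclosed Z /\ zclosed W /\ (forall x, X x <-> Z x /\ ~ W x).

Definition rel_closed (C : comNzRingType) (m : nat) (Z X : pset C m) : Prop :=
  exists W : pset C m, zclosed W /\ (forall x, Z x <-> X x /\ W x).

Definition regular_on (C : fieldType) (m k : nat) (X : pset C m)
    (phi : 'rV[C]_m -> 'rV[C]_k) : Prop :=
  forall x, X x -> exists (p : 'I_k -> 'rV[C]_m -> C) (q : 'rV[C]_m -> C),
    (forall j, polyfun (p j)) /\ polyfun q /\ q x <> 0 /\
    (forall y, X y -> q y <> 0 -> forall j, phi y 0 j = p j y / q y).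

Definition var_iso (C : fieldType) (m k : nat) (X : pset C m) (Y : pset C k) : Prop :=
  exists (phi : 'rV[C]_m -> 'rV[C]_k) (psi : 'rV[C]_k -> 'rV[C]_m),
    regular_on X phi /\ regular_on Y psi /\
    (forall x, X x -> Y (phi x)) /\ (forall y, Y y -> X (psi y)) /\
    (forall x, X x -> psi (phi x) = x) /\ (forall y, Y y -> phi (psi y) = y).

(* An additive invariant (motivic measure) with values in an abelian group G:
   isomorphism invariant and satisfying the scissor relation
   [X] = [Z] + [X \ Z] for Z closed in X.  An identity holds in the Grothendieck
   group K_0(Var_C) iff it holds for every such invariant (universal property). *)
Definition additive_invariant (C : fieldType) (G : zmodType)
    (chi : forall m, pset C m -> G) : Prop :=
  (forall m k (X : pset C m) (Y : pset C k),
      locally_closed X -> locally_closed Y -> var_iso X Y -> chi m X = chi k Y) /\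
  (forall m (X Z : pset C m), locally_closed X -> rel_closed Z X ->
      chi m X = chi m Z + chi m (fun x => X x /\ ~ Z x)).

Definition affine_space (C : Type) (m : nat) : pset C m := fun _ => True.

(* A Wirtinger presentation on n generators (arcs x_0,...,x_{n-1}) comes from a
   diagram with n crossings; at crossing i the under-arc x_i continues as
   x_{i+1 mod n}, the over-arc is x_{over i}, and the sign is pos i; the relator is
   x_{i+1} = x_{over i}^e x_i x_{over i}^{-e} (e = +1 if pos i, -1 otherwise).
   The Alexander matrix uses the relators of crossings 0..n-2 (one relator is
   redundant).  Abelianized Fox derivatives (s = t^e):
      d/dx_{over i} : 1 - s,   d/dx_i : s,   d/dx_{i+1} : -1   (summed if indices coincide). *)
Definition crossing_of (n : nat) (i : 'I_n.-1) : 'I_n := widen_ord (leq_pred n) i.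

Definition alexander_matrix (C : fieldType) (n : nat) (over : 'I_n -> 'I_n)
    (pos : 'I_n -> bool) (t : C) : 'M[C]_(n.-1, n) :=
  \matrix_(i, j)
    (let c := crossing_of i in
     let s := if pos c then t else t^-1 in
     (if j == over c then 1 - s else 0) + (if (j : nat) == (c : nat) then s else 0)
     - (if (j : nat) == (c.+1 %% n)%N then 1 else 0)).

Definition minors_vanish (C : fieldType) (n : nat) (over : 'I_n -> 'I_n)
    (pos : 'I_n -> bool) (r : nat) (t : C) : Prop :=
  forall (f : 'I_r -> 'I_n.-1) (g : 'I_r -> 'I_n), injective f -> injective g ->
    \det (mxsub f g (alexander_matrix over pos t)) = 0.

(* V(E^k) in C^*: E^k = 0 for k <= 0, generated by the (n-k)-minors for
   0 < k <= n-1, and the unit ideal for k >= n *)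
Definition VE (C : fieldType) (n : nat) (over : 'I_n -> 'I_n)
    (pos : 'I_n -> bool) (k : nat) (t : C) : Prop :=
  t != 0 /\
  (if k == 0%N then True
   else if (n <= k)%N then False
   else minors_vanish over pos (n - k) t).

Definition SK (C : fieldType) (n : nat) (over : 'I_n -> 'I_n)
    (pos : 'I_n -> bool) (k : nat) (t : C) : Prop :=
  VE over pos k t /\ ~ VE over pos k.+1 t.

(* R_{AGL_1}(K) as a subset of C^{1+n}: coordinates (t, a_0, ..., a_{n-1}),
   t <> 0 and A_K(t) a = 0 *)
Definition rep_variety (C : fieldType) (n : nat) (over : 'I_n -> 'I_n)
    (pos : 'I_n -> bool) : pset C n.+1 :=
  fun x => let t := x 0 ord0 in
           t != 0 /\
           alexander_matrix over pos t *m (\col_j x 0 (lift ord0 j)) = 0.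

From HB Require Import structures.
From mathcomp Require Import all_boot all_order all_algebra.
From mathcomp Require Import reals complex.
From mathcomp Require Import ring zify.
From Stdlib Require Import FunctionalExtensionality PropExtensionality.
Import Order.TTheory GRing.Theory Num.Theory.
Local Open Scope ring_scope.
Set Implicit Arguments. Unset Strict Implicit. Unset Printing Implicit Defensive.

(* Fibre the representation variety over the coordinate t.  Over t in C^* the
   fibre is the null space of A_K(t), an affine space of dimension n - rank A_K(t),
   which equals k + 1 exactly when t lies in S^k_K.  Every row of A_K(t) sums to
   zero, so the kernel always contains the constant vectors; and t^(n-1) times an
   (n-1)-minor of A_K(t) is a polynomial in t taking the value 1 at t = 1, so the
   rank is n - 1, and the fibre the line of constant vectors, outside the finite
   set T of its roots.  Cutting R along the finitely many fibres over T, and A^2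
   along the lines {y_0 = t}, t in 0 :: T, leaves the same piece (C^* - T) x A^1
   in both, and the scissor relations give the formula. *)

Section Minors.
Variable F : fieldType.

Lemma row_free_rowsub m n k (A : 'M[F]_(m, n)) (f : 'I_k -> 'I_m) :
  injective f -> row_free A -> row_free (rowsub f A).
Proof.
move=> f_inj /row_freeP [B AB1]; apply/row_freeP.
exists (B *m colsub f 1%:M); rewrite mulmxA mul_rowsub_mx AB1.
apply/matrixP => i j; rewrite !mxE (bigD1 (f i)) //= big1 ?addr0.
  by rewrite !mxE eqxx mul1r (inj_eq f_inj).
by move=> l /negPf neq_l; rewrite !mxE eq_sym neq_l mul0r.
Qed.

Lemma minor_neq0_rank m n r (A : 'M[F]_(m, n)) (f : 'I_r -> 'I_m) (g : 'I_r -> 'I_n) :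
  \det (mxsub f g A) != 0 -> (r <= \rank A)%N.
Proof.
move=> detA; have unitA : mxsub f g A \in unitmx by rewrite unitmxE unitfE.
rewrite -(mxrank_unit unitA) mxsubrc (leq_trans (mxrankS (rowsub_sub _ _))) //.
by rewrite -[A in colsub g A]mulmx1 -mulmx_colsub mxrankM_maxl.
Qed.

Lemma row_free_minor r n (B : 'M[F]_(r, n)) : row_free B ->
  exists2 g : 'I_r -> 'I_n, injective g & \det (colsub g B) != 0.
Proof.
move=> freeB; have rkBT : \rank B^T = r by rewrite mxrank_tr; apply/eqP.
exists (maxrankfun B^T \o cast_ord (esym rkBT)).
  by move=> i j /maxrankfun_inj /cast_ord_inj.
have freeBT : row_free (rowsub (maxrankfun B^T \o cast_ord (esym rkBT)) B^T).
  by rewrite rowsub_comp row_free_rowsub ?maxrowsub_free //; apply: cast_ord_inj.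
by rewrite -det_tr trmx_mxsub -unitfE -unitmxE -row_free_unit.
Qed.

Lemma rank_minor_neq0 m n r (A : 'M[F]_(m, n)) : (r <= \rank A)%N ->
  exists (f : 'I_r -> 'I_m) (g : 'I_r -> 'I_n),
    [/\ injective f, injective g & \det (mxsub f g A) != 0].
Proof.
move=> le_rA; have widen_inj : injective (widen_ord le_rA).
  by move=> i j /(congr1 val) /= /val_inj.
pose f := maxrankfun A \o widen_ord le_rA.
have f_inj : injective f by move=> i j /maxrankfun_inj /widen_inj.
have freeB : row_free (rowsub f A) by rewrite rowsub_comp row_free_rowsub ?maxrowsub_free.
have [g g_inj detB] := row_free_minor freeB.
by exists f, g; split => //; rewrite mxsubcr.
Qed.

Lemma minors_eq0P m n r (A : 'M[F]_(m, n)) :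
  (forall (f : 'I_r -> 'I_m) (g : 'I_r -> 'I_n), injective f -> injective g ->
     \det (mxsub f g A) = 0) <-> (\rank A < r)%N.
Proof.
split=> [minors0 | ltAr f g _ _].
  rewrite ltnNge; apply/negP => /rank_minor_neq0 [f [g [f_inj g_inj]]].
  by rewrite minors0 ?eqxx.
by apply/eqP; apply: contraTT ltAr => /minor_neq0_rank; rewrite -leqNgt.
Qed.

Lemma rank_const_rV n (a : F) :
  (0 < n)%N -> a != 0 -> \rank (const_mx a : 'rV[F]_n) = 1%N.
Proof.
move=> n_gt0 a_neq0; rewrite rank_rV; case: eqP => // /rowP/(_ (Ordinal n_gt0)).
by rewrite !mxE => /eqP; rewrite (negPf a_neq0).
Qed.

End Minors.

Section PolynomialFunctions.
Variables (C : comNzRingType) (m : nat).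
Implicit Types f g : 'rV[C]_m -> C.

Lemma polyfun_ext f g : polyfun f -> f =1 g -> polyfun g.
Proof. by move=> pf /functional_extensionality <-. Qed.

Lemma polyfun_sub f g : polyfun f -> polyfun g -> polyfun (fun x => f x - g x).
Proof.
move=> pf pg; apply: (@polyfun_ext (fun x => f x + (-1) * g x)) => [|x].
  by apply: pf_add => //; apply: pf_mul => //; apply: pf_const.
by rewrite mulN1r.
Qed.

Lemma polyfun_sum I (r : seq I) (F : I -> 'rV[C]_m -> C) :
  (forall i, polyfun (F i)) -> polyfun (fun x => \sum_(i <- r) F i x).
Proof.
move=> pF; elim: r => [|i r IHr].
  by apply: (polyfun_ext (pf_const _ 0)) => x; rewrite big_nil.
by apply: (polyfun_ext (pf_add (pF i) IHr)) => x; rewrite big_cons.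
Qed.

Lemma polyfun_prod I (r : seq I) (F : I -> 'rV[C]_m -> C) :
  (forall i, polyfun (F i)) -> polyfun (fun x => \prod_(i <- r) F i x).
Proof.
move=> pF; elim: r => [|i r IHr].
  by apply: (polyfun_ext (pf_const _ 1)) => x; rewrite big_nil.
by apply: (polyfun_ext (pf_mul (pF i) IHr)) => x; rewrite big_cons.
Qed.

Lemma polyfun_horner (p : {poly C}) f : polyfun f -> polyfun (fun x => p.[f x]).
Proof.
move=> pf; apply: (@polyfun_ext (fun x => \sum_(i < size p) p`_i * \prod_(j < i) f x)).
  by apply: polyfun_sum => i; apply: pf_mul; [apply: pf_const | apply: polyfun_prod].
by move=> x; rewrite horner_coef; apply: eq_bigr => i _; rewrite prodr_const card_ord.
Qed.

End PolynomialFunctions.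

Section QuasiAffine.
Variables (F : fieldType) (m : nat).
Implicit Types (X Y Z : pset F m) (T : seq F).

Lemma zclosed_ext Z Z' : (forall x, Z x <-> Z' x) -> zclosed Z -> zclosed Z'.
Proof. by move=> eqZ [k [f [pf defZ]]]; exists k, f; split=> // x; rewrite -eqZ. Qed.

Lemma zclosedT : zclosed (fun _ : 'rV[F]_m => True).
Proof. by exists 0%N, (fun _ _ => 0); split=> [[] | x]. Qed.

Lemma zclosed_eq0 (f : 'rV[F]_m -> F) : polyfun f -> zclosed (fun x => f x = 0).
Proof. by move=> pf; exists 1%N, (fun=> f); split=> // x; split=> [f0 _ | /(_ ord0)]. Qed.

Lemma locally_closed_ext X X' :
  (forall x, X x <-> X' x) -> locally_closed X -> locally_closed X'.
Proof.
by move=> eqX [Z [W [cZ [cW defX]]]]; exists Z, W; do 2!split=> //; move=> x; rewrite -eqX.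
Qed.

Lemma locally_closed_open Z (w : 'rV[F]_m -> F) : zclosed Z -> polyfun w ->
  locally_closed (fun x => Z x /\ w x != 0).
Proof.
move=> cZ pw; exists Z, (fun x => w x = 0); do 2!split=> //; first exact: zclosed_eq0.
by move=> x; split=> -[Zx /eqP].
Qed.

Lemma zclosed_and Z Z' :
  zclosed Z -> zclosed Z' -> zclosed (fun x => Z x /\ Z' x).
Proof.
move=> [k [f [pf defZ]]] [k' [f' [pf' defZ']]].
exists (k + k')%N, (fun i => match split i with inl i => f i | inr i => f' i end).
split=> [i | x]; first by case: (split i).
rewrite defZ defZ'; split=> [[Zx Z'x] i | fx0]; first by case: (split i).
by split=> i; [have := fx0 (unsplit (inl i)) | have := fx0 (unsplit (inr i))];
  rewrite unsplitK.
Qed.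

Lemma locally_closed_and X Z :
  locally_closed X -> zclosed Z -> locally_closed (fun x => X x /\ Z x).
Proof.
move=> [Z0 [W [cZ0 [cW defX]]]] cZ; exists (fun x => Z0 x /\ Z x), W.
by do 2?split; [apply: zclosed_and | | move=> x; rewrite defX; tauto].
Qed.

Lemma locally_closed_zclosed Z : zclosed Z -> locally_closed Z.
Proof.
move=> cZ; apply: (@locally_closed_ext (fun x => Z x /\ (fun=> 1 : F) x != 0)).
  by move=> x /=; rewrite oner_neq0; split=> [[]|].
by apply: locally_closed_open => //; apply: pf_const.
Qed.

Lemma locally_closed_affine : locally_closed (@affine_space F m).
Proof. exact/locally_closed_zclosed/zclosedT. Qed.

Lemma regular_on_polyfun X k (phi : 'rV[F]_m -> 'rV[F]_k) :
  (forall j, polyfun (fun x => phi x 0 j)) -> regular_on X phi.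
Proof.
move=> pphi x _; exists (fun j x => phi x 0 j), (fun=> 1); do 3?split.
- exact: pphi.
- exact: pf_const.
- exact/eqP/oner_neq0.
- by move=> y _ _ j; rewrite divr1.
Qed.

End QuasiAffine.

Section FirstCoordinate.
Variables (F : fieldType) (m : nat).
Implicit Types (X Z : pset F m.+1) (T : seq F).

Lemma prod_subr_eq0 T (y : F) : (\prod_(t <- T) (y - t) == 0) = (y \in T).
Proof.
rewrite prodf_seq_eq0; apply/hasP/idP => [[t Tt /=] | Ty].
  by rewrite subr_eq0 => /eqP ->.
by exists y; rewrite //= subrr.
Qed.

Lemma polyfun_head_prod T : polyfun (fun x : 'rV[F]_m.+1 => \prod_(t <- T) (x 0 0 - t)).
Proof. by apply: polyfun_prod => t; apply: polyfun_sub; [apply: pf_coord | apply: pf_const]. Qed.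

Lemma zclosed_head_in T : zclosed (fun x : 'rV[F]_m.+1 => x 0 0 \in T).
Proof.
apply: zclosed_ext (zclosed_eq0 (polyfun_head_prod T)) => x.
by rewrite -prod_subr_eq0; split=> /eqP.
Qed.

Lemma zclosed_head_eq t : zclosed (fun x : 'rV[F]_m.+1 => x 0 0 = t).
Proof.
apply: zclosed_ext (zclosed_head_in [:: t]) => x.
by rewrite mem_seq1; split=> /eqP.
Qed.

Lemma locally_closed_head_notin Z T : zclosed Z ->
  locally_closed (fun x => Z x /\ x 0 0 \notin T).
Proof.
move=> cZ; apply: locally_closed_ext (locally_closed_open cZ (polyfun_head_prod T)).
by move=> x; rewrite prod_subr_eq0.
Qed.

End FirstCoordinate.

Section AdditiveInvariants.
Variables (F : fieldType) (G : zmodType) (chi : forall m, pset F m -> G).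
Hypothesis chi_additive : additive_invariant chi.

Lemma chi_ext m (X Y : pset F m) : (forall x, X x <-> Y x) -> chi X = chi Y.
Proof.
move=> eqXY; congr (chi _); apply: functional_extensionality => x.
exact: propositional_extensionality.
Qed.

Lemma chi_iso m k (X : pset F m) (Y : pset F k) :
  locally_closed X -> locally_closed Y -> var_iso X Y -> chi X = chi Y.
Proof. by case: chi_additive => iso _; apply: iso. Qed.

Lemma chi_scissor m (X Z : pset F m) :
  locally_closed X -> rel_closed Z X -> chi X = chi Z + chi (fun x => X x /\ ~ Z x).
Proof. by case: chi_additive => _; apply. Qed.

Lemma chi_set0 m : chi (fun _ : 'rV[F]_m => False) = 0.
Proof.
have lc0 : locally_closed (fun _ : 'rV[F]_m => False).
  apply: locally_closed_ext (locally_closed_open (@zclosedT F m) (pf_const _ 0)).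
  by move=> x /=; rewrite eqxx; split=> -[].
have rc0 : rel_closed (fun _ : 'rV[F]_m => False) (fun=> False).
  by exists (fun=> True); split; [apply: zclosedT | move=> x; tauto].
have := chi_scissor lc0 rc0.
rewrite (@chi_ext _ (fun x => False /\ ~ False) (fun=> False)); last by move=> x; tauto.
by move/eqP; rewrite -subr_eq subrr eq_sym => /eqP.
Qed.

Lemma chi_head_in m (S : pset F m.+1) (T : seq F) : locally_closed S -> uniq T ->
  chi (fun x => S x /\ x 0 0 \in T) = \sum_(t <- T) chi (fun x => S x /\ x 0 0 = t).
Proof.
move=> lcS; elim: T => [_ | a T IHT /= /andP [aT uT]].
  by rewrite big_nil -(chi_set0 m.+1); apply: chi_ext => x; rewrite in_nil; split=> -[].
rewrite big_cons -IHT //.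
rewrite (@chi_scissor _ _ (fun x => S x /\ x 0 0 = a)
  (locally_closed_and lcS (zclosed_head_in m (a :: T)))); last first.
  exists (fun x => x 0 0 = a); split=> [|x]; first exact: zclosed_head_eq.
  by rewrite in_cons; split=> [[Sx ->] | [[]]]; rewrite ?eqxx.
congr (_ + _); apply: chi_ext => x; rewrite in_cons.
split=> [[[Sx /orP [/eqP xa | xT]] xna] | [Sx xT]]; [by case: xna | by [] | ].
by split=> [|[_ xa]]; [split=> //; rewrite xT orbT | move: aT; rewrite -xa xT].
Qed.

Lemma chi_head_split m (S : pset F m.+1) (T : seq F) : locally_closed S -> uniq T ->
  chi S = \sum_(t <- T) chi (fun x => S x /\ x 0 0 = t)
          + chi (fun x => S x /\ x 0 0 \notin T).
Proof.
move=> lcS uT; rewrite -chi_head_in // (@chi_scissor _ _ (fun x => S x /\ x 0 0 \in T) lcS).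
  congr (_ + _); apply: chi_ext => x.
  split=> [[Sx nxT] | [Sx /negP nxT]]; split=> //; last by case.
  by apply/negP => xT; apply: nxT.
by exists (fun x => x 0 0 \in T); split=> [|x //]; apply: zclosed_head_in.
Qed.

End AdditiveInvariants.

Section RowCons.
Variables (F : fieldType) (n : nat).

Definition row_tail (x : 'rV[F]_n.+1) : 'rV[F]_n := \row_j x 0 (lift ord0 j).

Definition row_cons (t : F) (v : 'rV[F]_n) : 'rV[F]_n.+1 :=
  \row_j oapp (v 0) t (unlift ord0 j).

Lemma row_cons_head t v : row_cons t v 0 0 = t.
Proof. by rewrite mxE unlift_none. Qed.

Lemma row_tail_cons t v : row_tail (row_cons t v) = v.
Proof. by apply/rowP => j; rewrite !mxE liftK. Qed.

Lemma row_consK (x : 'rV[F]_n.+1) : row_cons (x 0 0) (row_tail x) = x.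
Proof. by apply/rowP => j; rewrite mxE; case: unliftP => [j'|] -> /=; rewrite ?mxE. Qed.

Lemma polyfun_row_tail_mulmx k (M : 'M[F]_(n, k)) j :
  polyfun (fun x : 'rV_n.+1 => (row_tail x *m M) 0 j).
Proof.
apply: (@polyfun_ext _ _ (fun x => \sum_i x 0 (lift ord0 i) * M i j)).
  by apply: polyfun_sum => i; apply: pf_mul; [apply: pf_coord | apply: pf_const].
by move=> x; rewrite mxE; apply: eq_bigr => i _; rewrite mxE.
Qed.

Lemma regular_on_row_cons m (X : pset F m) (h : 'rV_m -> F) (v : 'rV_m -> 'rV_n) :
  polyfun h -> (forall j, polyfun (fun x => v x 0 j)) ->
  regular_on X (fun x => row_cons (h x) (v x)).
Proof.
move=> ph pv; apply: regular_on_polyfun => j.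
case: (unliftP ord0 j) => [j'|] ->; last first.
  by apply: (polyfun_ext ph) => x; rewrite row_cons_head.
by apply: (polyfun_ext (pv j')) => x; rewrite mxE liftK.
Qed.

End RowCons.

Section Cylinders.
Variables (F : fieldType) (n : nat).

Lemma var_iso_cylinder (P : F -> Prop) p (K : 'M[F]_(p, n)) :
  var_iso (fun x : 'rV_n.+1 => P (x 0 0) /\ (row_tail x <= K)%MS)
          (fun y : 'rV_(\rank K).+1 => P (y 0 0)).
Proof.
pose B := row_base K.
exists (fun x : 'rV_n.+1 => row_cons (x 0 0) (row_tail x *m pinvmx B)),
       (fun y : 'rV_(\rank K).+1 => row_cons (y 0 0) (row_tail y *m B)).
do 2?split; try by apply: regular_on_row_cons => [|j];
  [apply: pf_coord | apply: polyfun_row_tail_mulmx].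
split=> [x [Px _] | ]; first by rewrite row_cons_head.
split=> [y Py | ].
  rewrite row_cons_head row_tail_cons; split=> //.
  by apply: submx_trans (submxMl _ _) _; rewrite eq_row_base.
split=> [x [_ xK] | y _].
  by rewrite row_cons_head row_tail_cons mulmxKpV ?row_consK ?eq_row_base.
rewrite row_cons_head row_tail_cons -mulmxA mulmxVp ?row_base_free // mulmx1.
exact: row_consK.
Qed.

Lemma var_iso_hyperplane t :
  var_iso (fun y : 'rV[F]_n.+1 => y 0 0 = t) (@affine_space F n).
Proof.
exists (@row_tail F n), (row_cons t); do 2?split.
- apply: regular_on_polyfun => j.
  by apply: (polyfun_ext (@pf_coord F _ (lift ord0 j))) => x; rewrite mxE.
- apply: (@regular_on_row_cons _ _ _ _ (fun=> t) id) => [|j].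
    exact: pf_const.
  exact: pf_coord.
split=> [x _ // | ]; split=> [v _ | ]; first exact: row_cons_head.
by split=> [x <- | v _]; rewrite ?row_consK ?row_tail_cons.
Qed.

End Cylinders.

Lemma sum_if_nat_eq (V : zmodType) n k (a : V) : (k < n)%N ->
  \sum_(j < n) (if (j : nat) == k then a else 0) = a.
Proof. by move=> lt_kn; rewrite -big_mkcond (big_pred1 (Ordinal lt_kn)). Qed.

Section AlexanderMatrix.
Variables (F : fieldType) (n : nat) (over : 'I_n -> 'I_n) (pos : 'I_n -> bool).
Hypothesis n_gt0 : (0 < n)%N.

Local Notation A t := (alexander_matrix over pos t).

Lemma alexander_row_sum0 (t : F) i : \sum_j A t i j = 0.
Proof.
have lt_in : (crossing_of i < n)%N by apply: ltn_ord.
under eq_bigr do rewrite mxE.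
rewrite sumrB big_split /= -big_mkcond big_pred1_eq.
by rewrite !sum_if_nat_eq ?ltn_pmod // subrK subrr.
Qed.

Lemma alexander_mul_const (t c : F) : A t *m const_mx c = 0 :> 'cV_n.-1.
Proof.
apply/colP => i; rewrite [LHS]mxE [RHS]mxE.
under eq_bigr do rewrite [const_mx _ _ _]mxE.
by rewrite -mulr_suml alexander_row_sum0 mul0r.
Qed.

Definition alexander_poly_matrix : 'M[{poly F}]_(n.-1, n) :=
  \matrix_(i, j)
    (let c := crossing_of i in
     let ts := if pos c then 'X * 'X else 1 in
     (if j == over c then 'X - ts else 0) + (if (j : nat) == (c : nat) then ts else 0)
     - (if (j : nat) == (c.+1 %% n)%N then 'X else 0)).

Lemma horner_alexander_poly_matrix (t : F) i j : t != 0 ->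
  (alexander_poly_matrix i j).[t] = t * A t i j.
Proof.
move=> t_neq0; rewrite !mxE /=.
by case: (pos _); case: (j == _); case: (_ == _); case: (_ == _);
  rewrite !hornerE /=; field.
Qed.

Let wcol := widen_ord (leq_pred n).

Definition alexander_minor_poly : {poly F} := \det (colsub wcol alexander_poly_matrix).

Lemma horner_alexander_minor_poly (t : F) : t != 0 ->
  alexander_minor_poly.[t] = t ^+ n.-1 * \det (colsub wcol (A t)).
Proof.
move=> t_neq0; rewrite -horner_evalE -det_map_mx map_mxsub -detZ.
congr (\det _); apply/matrixP => i j.
by have := horner_alexander_poly_matrix i (wcol j) t_neq0; rewrite !mxE /= horner_evalE.
Qed.

Lemma alexander_minor_poly_at1 : alexander_minor_poly.[1] = 1.
Proof.
(* At t = 1 the over-arc entries 1 - t^(+-1) vanish and the minor is unitriangular. *)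
have A1E (i j : 'I_n.-1) : (colsub wcol (A (1 : F)))^T i j =
    (if (i : nat) == j then 1 else 0) - (if (i : nat) == j.+1 then 1 else 0).
  rewrite !mxE /= invr1 modn_small; last by have := ltn_ord j; lia.
  by case: (pos _); rewrite subrr if_same add0r.
rewrite horner_alexander_minor_poly ?oner_neq0 // expr1n mul1r -det_tr det_trig.
  by apply: big1 => i _; rewrite A1E eqxx ltn_eqF // subr0.
apply/is_trig_mxP => i j lt_ij.
by rewrite A1E !ltn_eqF ?subrr // (ltn_trans lt_ij).
Qed.

Lemma alexander_minor_poly_neq0 : alexander_minor_poly != 0.
Proof.
by apply: contra_neq (@oner_neq0 F) => P0; rewrite -alexander_minor_poly_at1 P0 horner0.
Qed.

Definition alexander_index (t : F) := (n - \rank (A t)).-1.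

Definition exceptional (t : F) := (t != 0) && (0 < alexander_index t)%N.

Lemma alexander_rank_le (t : F) : (\rank (A t) <= n.-1)%N.
Proof. exact: rank_leq_row. Qed.

Lemma alexander_indexS (t : F) : (alexander_index t).+1 = (n - \rank (A t))%N.
Proof. by have := alexander_rank_le t; rewrite /alexander_index; lia. Qed.

Lemma root_alexander_minor_poly (t : F) : exceptional t -> root alexander_minor_poly t.
Proof.
case/andP => t_neq0 idx_gt0; rewrite /root horner_alexander_minor_poly //.
apply/eqP; have [-> | /minor_neq0_rank] := eqVneq (\det (colsub wcol (A t))) 0.
  by rewrite mulr0.
by move: idx_gt0; rewrite /alexander_index; lia.
Qed.

Lemma VE_rankP k (t : F) : (0 < k < n)%N ->
  VE over pos k t <-> t != 0 /\ (\rank (A t) < n - k)%N.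
Proof.
case/andP => k_gt0 lt_kn; rewrite /VE (gtn_eqF k_gt0) leqNgt lt_kn /=.
by split=> -[t_neq0 minors]; split=> //; apply/minors_eq0P.
Qed.

Lemma VE_large k (t : F) : (n <= k)%N -> ~ VE over pos k t.
Proof. by move=> le_nk; rewrite /VE (gtn_eqF (leq_trans n_gt0 le_nk)) le_nk => -[]. Qed.

Lemma SK_alexander_index k (t : F) : (1 <= k <= n.-1)%N ->
  SK over pos k t <-> t != 0 /\ alexander_index t = k.
Proof.
move=> /andP [k_gt0 le_kn]; have := alexander_rank_le t.
rewrite /SK VE_rankP /alexander_index; last by apply/andP; split=> //; lia.
have [lt_kn | le_nk] := ltnP k.+1 n; last first.
  have notVE := @VE_large _ t le_nk.
  by move=> le_r; split=> [[[-> lt_r] _] | [-> idx]]; split=> //; lia.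
rewrite VE_rankP; last by apply/andP.
move=> le_r; split=> [[[-> lt_r] not_lt] | [-> idx]].
  have ge_r : ~~ (\rank (A t) < n - k.+1)%N by apply/negP => ?; apply: not_lt.
  by split=> //; lia.
by split=> [|[_]]; [split=> // |]; lia.
Qed.

Lemma kermx_alexander (t : F) : alexander_index t = 0%N ->
  (kermx (A t)^T :=: (const_mx 1 : 'rV_n))%MS.
Proof.
move=> idx0; have := alexander_indexS t; rewrite idx0 => rk_n.
pose one : 'rV[F]_n := const_mx 1.
have one_ker : (one <= kermx (A t)^T)%MS.
  apply/sub_kermxP; apply: trmx_inj; rewrite trmx_mul trmxK trmx0.
  rewrite (_ : one^T = const_mx 1) ?alexander_mul_const //.
  by apply/matrixP => i j; rewrite !mxE.
apply: eqmx_sym; apply/eqmxP; rewrite -(mxrank_leqif_eq one_ker).2.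
by rewrite mxrank_ker mxrank_tr -rk_n rank_const_rV ?oner_neq0.
Qed.

End AlexanderMatrix.

Section AffineSpaces.
Variables (F : fieldType) (G : zmodType) (chi : forall m, pset F m -> G).
Hypothesis chi_additive : additive_invariant chi.

Lemma chi_affine_split m (U : seq F) : uniq U ->
  chi (@affine_space F m.+1) =
    \sum_(t <- U) chi (@affine_space F m) + chi (fun y : 'rV_m.+1 => y 0 0 \notin U).
Proof.
move=> uU; rewrite (chi_head_split chi_additive (locally_closed_affine F m.+1) uU).
congr (_ + _); last by apply: chi_ext => y; split=> [[] | ].
apply: eq_bigr => t _; rewrite (@chi_ext _ _ chi _ _ (fun y => y 0 0 = t)); last first.
  by move=> y; split=> [[] | ].
apply: (chi_iso chi_additive _ _ (var_iso_hyperplane m t)).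
  exact/locally_closed_zclosed/zclosed_head_eq.
exact: locally_closed_affine.
Qed.

End AffineSpaces.

Section RepresentationVariety.
Variables (F : fieldType) (n : nat) (over : 'I_n -> 'I_n) (pos : 'I_n -> bool).
Hypothesis n_gt0 : (0 < n)%N.

Local Notation A t := (alexander_matrix over pos t).
Local Notation rep := (@rep_variety F n over pos).
Local Notation Ap := (@alexander_poly_matrix F n over pos).

Definition alexander_eqs (x : 'rV[F]_n.+1) : Prop :=
  forall i, \sum_j (Ap i j).[x 0 0] * x 0 (lift ord0 j) = 0.

Lemma zclosed_alexander_eqs : zclosed alexander_eqs.
Proof.
exists n.-1, (fun i x => \sum_j (Ap i j).[x 0 0] * x 0 (lift ord0 j)); split=> // i.
by apply: polyfun_sum => j; apply: pf_mul; [apply/polyfun_horner/pf_coord | apply: pf_coord].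
Qed.

Lemma rep_varietyE x : rep x <-> alexander_eqs x /\ x 0 0 \notin [:: 0].
Proof.
rewrite mem_seq1 /rep_variety /alexander_eqs.
have [-> | t_neq0] := eqVneq (x 0 0) 0; first by split=> -[].
have eqsE i : \sum_j (Ap i j).[x 0 0] * x 0 (lift ord0 j) =
              x 0 0 * (A (x 0 0) *m \col_j x 0 (lift ord0 j)) i 0.
  rewrite mxE mulr_sumr; apply: eq_bigr => j _.
  by rewrite horner_alexander_poly_matrix // -mulrA [(\col__ _) _ _]mxE.
split=> [[_ Ax0] | [eqs _]]; first by split=> // i; rewrite eqsE Ax0 mxE mulr0.
split=> //; apply/colP => i; rewrite [RHS]mxE; apply/eqP.
by rewrite -(mulrI_eq0 _ (lregP t_neq0)) -eqsE eqs.
Qed.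

Lemma rep_variety_kerE x :
  rep x <-> x 0 0 != 0 /\ (row_tail x <= kermx (A (x 0 0))^T)%MS.
Proof.
have colE : \col_j x 0 (lift ord0 j) = (row_tail x)^T.
  by apply/matrixP => i j; rewrite !mxE.
rewrite /rep_variety colE; split=> -[t_neq0 Ax0]; split=> //.
  by apply/sub_kermxP/trmx_inj; rewrite trmx_mul trmxK Ax0 trmx0.
by apply/trmx_inj; rewrite trmx_mul trmxK (sub_kermxP Ax0) trmx0.
Qed.

Lemma locally_closed_rep_variety : locally_closed rep.
Proof.
apply: locally_closed_ext (locally_closed_head_notin [:: 0] zclosed_alexander_eqs) => x.
by rewrite rep_varietyE.
Qed.

Variables (G : zmodType) (chi : forall m, pset F m -> G).
Hypothesis chi_additive : additive_invariant chi.

Lemma chi_rep_fiber t : t != 0 ->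
  chi (fun x => rep x /\ x 0 0 = t) =
  chi (@affine_space F (alexander_index over pos t).+1).
Proof.
move=> t_neq0; pose K := kermx (A t)^T.
have fiberE x : rep x /\ x 0 0 = t <-> x 0 0 = t /\ (row_tail x <= K)%MS.
  by rewrite rep_variety_kerE; split=> [[[_ xK] xt] | [xt xK]]; rewrite xt in xK *.
have lc_fiber := locally_closed_and locally_closed_rep_variety (zclosed_head_eq n t).
rewrite (chi_ext chi fiberE).
rewrite (chi_iso chi_additive (locally_closed_ext fiberE lc_fiber) _
  (var_iso_cylinder (fun s => s = t) K)); last exact/locally_closed_zclosed/zclosed_head_eq.
rewrite (chi_iso chi_additive _ (locally_closed_affine _ _) (var_iso_hyperplane _ t));
  last exact/locally_closed_zclosed/zclosed_head_eq.
by rewrite mxrank_ker mxrank_tr alexander_indexS.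
Qed.

Lemma chi_rep_generic (T : seq F) : (forall t, (t \in T) = exceptional over pos t) ->
  chi (fun x => rep x /\ x 0 0 \notin T) = chi (fun y : 'rV_2 => y 0 0 \notin 0 :: T).
Proof.
move=> memT; pose one : 'rV[F]_n := const_mx 1.
have genericE x : rep x /\ x 0 0 \notin T <->
                  x 0 0 \notin 0 :: T /\ (row_tail x <= one)%MS.
  rewrite rep_variety_kerE inE negb_or.
  have [-> | t_neq0] /= := eqVneq (x 0 0) 0; first by split=> [[[]] | []].
  have [xT | xT] /= := boolP (x 0 0 \in T); first by split=> -[].
  have idx0 : alexander_index over pos (x 0 0) = 0%N.
    by move: xT; rewrite memT /exceptional t_neq0 /= lt0n negbK => /eqP.
  by rewrite (kermx_alexander n_gt0 idx0); split=> -[].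
have lc_generic : locally_closed (fun x => rep x /\ x 0 0 \notin T).
  apply: locally_closed_ext (locally_closed_head_notin (0 :: T) zclosed_alexander_eqs).
  move=> x; rewrite rep_varietyE !inE negb_or.
  by split=> [[eqs /andP [x0 xT]] | [[eqs x0] xT]]; rewrite ?x0 ?xT.
rewrite (chi_ext chi genericE).
rewrite (chi_iso chi_additive (locally_closed_ext genericE lc_generic) _
  (var_iso_cylinder (fun s => s \notin 0 :: T) one)); last first.
  apply: locally_closed_ext (locally_closed_head_notin (0 :: T) (zclosedT F _)).
  by move=> y; split=> [[] | ].
by rewrite rank_const_rV ?oner_neq0.
Qed.

Lemma chi_rep_variety (T : seq F) : uniq T ->
  (forall t, (t \in T) = exceptional over pos t) ->
  chi rep = \sum_(t <- T) chi (@affine_space F (alexander_index over pos t).+1)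
            + chi (fun y : 'rV_2 => y 0 0 \notin 0 :: T).
Proof.
move=> uT memT; rewrite (chi_head_split chi_additive locally_closed_rep_variety uT).
rewrite chi_rep_generic //; congr (_ + _).
by apply: eq_big_seq => t; rewrite memT => /andP [t_neq0 _]; apply: chi_rep_fiber.
Qed.

End RepresentationVariety.

Lemma exceptional_seq (F : closedFieldType) n (over : 'I_n -> 'I_n) (pos : 'I_n -> bool) :
  (0 < n)%N -> exists2 T : seq F, uniq T & forall t, (t \in T) = exceptional over pos t.
Proof.
move=> n_gt0; have [r defP] := closed_field_poly_normal (@alexander_minor_poly F n over pos).
exists (undup [seq t <- r | exceptional over pos t]) => [|t]; first exact: undup_uniq.
rewrite mem_undup mem_filter andb_idr // => /(root_alexander_minor_poly n_gt0).
rewrite defP rootZ ?lead_coef_eq0 ?alexander_minor_poly_neq0 //.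
by rewrite root_prod_XsubC.
Qed.

Lemma sum_mulrn_fibers (V : zmodType) (I : eqType) (c : nat -> V) (g : I -> nat)
    (T : seq I) a b :
  {in T, forall t, a <= g t < b}%N ->
  \sum_(a <= k < b) c k *+ size [seq t <- T | g t == k] = \sum_(t <- T) c (g t).
Proof.
under eq_bigr do rewrite size_filter.
elim: T => [_ | t T IHT gT]; first by rewrite big_nil big1 // => k _; rewrite mulr0n.
rewrite big_cons -IHT => [|u Tu]; last by apply: gT; rewrite inE Tu orbT.
under eq_bigr do rewrite /= mulrnDr.
rewrite big_split /=; congr (_ + _).
have gt_ab : g t \in index_iota a b by rewrite mem_index_iota gT ?mem_head.
rewrite (bigD1_seq (g t) gt_ab (iota_uniq _ _)) /= eqxx mulr1n big1 ?addr0 //.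
by move=> k /negPf; rewrite eq_sym => ->; rewrite mulr0n.
Qed.

Unset Implicit Arguments.

Theorem mainTheorem4 (R : realType) (n : nat) (hn : (0 < n)%N)
    (over : 'I_n -> 'I_n) (pos : 'I_n -> bool) :
  exists s : nat -> seq R[i],
    (forall k, (1 <= k <= n.-1)%N ->
       uniq (s k) /\ forall t : R[i], t \in s k <-> SK over pos k t) /\
    forall (G : zmodType) (chi : forall m, pset R[i] m -> G),
      additive_invariant chi ->
      chi n.+1 (rep_variety over pos) =
        chi 2%N (@affine_space R[i] 2) - chi 1%N (@affine_space R[i] 1)
        + \sum_(1 <= k < n) (chi k.+1 (@affine_space R[i] k.+1)
                             - chi 1%N (@affine_space R[i] 1)) *+ size (s k).
Proof.
have [T uT memT] := exceptional_seq R[i] over pos hn.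
exists (fun k => [seq t <- T | alexander_index over pos t == k]).
split=> [k k_range | G chi chi_additive].
  split=> [|t]; first exact: filter_uniq.
  rewrite mem_filter memT SK_alexander_index // /exceptional.
  case/andP: k_range => k_gt0 _.
  by split=> [/andP [/eqP <- /andP [-> _]] | [-> idx]]; rewrite ?idx ?eqxx ?k_gt0.
have zero_notin_T : 0 \notin T by rewrite memT /exceptional eqxx.
rewrite (chi_rep_variety hn chi_additive uT memT).
rewrite (chi_affine_split chi_additive 1 (U := 0 :: T)) /= ?zero_notin_T //.
rewrite sum_mulrn_fibers; last first.
  by move=> t; rewrite memT => /andP [_ ->]; rewrite -ltnS alexander_indexS // ltnS leq_subr.
rewrite big_cons sumrB.
set a := \sum_(t <- T) _; set d := chi 1%N _; set b := \sum_(t <- T) d.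
set y := chi 2 _.
by rewrite -[d + b + y]addrA [d + _]addrC addrK [RHS]addrCA [b + y]addrC addrK.
Qed.
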